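(* For real $0\le x<\pi$ and every integer $r\ge2$, $$\log\mathcal C_r\left(\frac x{2\pi}\right)=\left(\frac x{2\pi}\right)^{r-1}\left(\log\left(\cos\frac x2\right)+(r-1)\sum_{n=1}^\infty\frac{\lambda(2n)}{n(2n+r-1)}\left(\frac x{\pi}\right)^{2n}\right).$$
   Context: For an integer $r\ge2$ let $P_r(y)=(1-y)\exp\left(y+\frac{y^2}{2}+\cdots+\frac{y^r}{r}\right)$. The multiple cosine function of Kurokawa–Koyama of order $r\ge2$ is $\mathcal C_r(x)=\prod_{n\ge1,\ n\text{ odd}}\left\{P_r\left(\frac{x}{n/2}\right)P_r\left(-\frac{x}{n/2}\right)^{(-1)^{r-1}}\right\}^{(n/2)^{r-1}}$, interpreted as $\mathcal C_r(x)=\exp\Big(\sum_{n\ge1,\,n\text{ odd}}(n/2)^{r-1}\big[\operatorname{Log}P_r(2x/n)+(-1)^{r-1}\operatorname{Log}P_r(-2x/n)\big]\Big)$, where $\operatorname{Log}P_r(y):=\operatorname{Log}(1-y)+y+\frac{y^2}{2}+\cdots+\frac{y^r}{r}$ with $\operatorname{Log}$ the principal branch. The series converges and defines a holomorphic function on $D=\mathbb C\setminus\big((-\infty,-\tfrac12]\cup[\tfrac12,\infty)\big)$, positive on $(-\tfrac12,\tfrac12)$; $\log\mathcal C_r(x)$ denotes the exponent above (the real logarithm for real $|x|<\tfrac12$). $\lambda(s)=\sum_{n=0}^\infty\frac1{(2n+1)^s}=(1-2^{-s})\zeta(s)$ is the Dirichlet lambda function. *)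

From Stdlib Require Import Reals.
From Coquelicot Require Import Coquelicot.
Open Scope R_scope.

(* Log P_r(y) = Log(1-y) + y + y^2/2 + ... + y^r/r  (real y < 1, principal log = ln) *)
Definition LogP (r : nat) (y : R) : R :=
  ln (1 - y) + sum_f_R0 (fun k => y ^ (k + 1) / INR (k + 1)) (r - 1).

Definition logC (r : nat) (x : R) : R :=
  Series (fun k : nat =>
    let n := INR (2 * k + 1) in
    (n / 2) ^ (r - 1) *
      (LogP r (2 * x / n) + (-1) ^ (r - 1) * LogP r (- (2 * x / n)))).

Definition dlambda (s : nat) : R :=
  Series (fun m : nat => / (INR (2 * m + 1)) ^ s).

(* Each factor of C_r is chosen so that, for |u| < 1,
     Log P_r(u) + (-1)^(r-1) Log P_r(-u) = -2 sum_m u^(r+1+2m) / (r+1+2m),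
   a power series with nonnegative coefficients. Summing over odd n and
   exchanging the two sums (all terms are nonnegative) gives
     log C_r(z/2) = -2 (z/2)^(r-1) sum_m lambda(2m+2) z^(2m+2) / (r+1+2m).
   On the other side, -ln cos(PI z/2) = sum_m lambda(2m+2) / (m+1) z^(2m+2):
   both sides vanish at 0 with derivative 0 there, and their second derivatives
   agree because PI^2 / (4 cos^2(PI z/2)) = sum_(n odd) (n+z)^-2 + (n-z)^-2, the
   partial-fraction expansion of csc^2 obtained by Herglotz's trick. The
   theorem then follows from
     1 / ((m+1)(2m+r+1)) = (1/(m+1) - 2/(2m+r+1)) / (r-1). *)

From Stdlib Require Import Reals Lra Lia ZArith.
From Coquelicot Require Import Coquelicot.
Open Scope R_scope.

Section NonnegSeries.

Variable a : nat -> R.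
Hypothesis a_ge0 : forall n, 0 <= a n.

Lemma sum_n_ge0 N : 0 <= sum_n a N.
Proof.
  induction N as [|N IH]; [rewrite sum_O; auto|].
  rewrite sum_Sn. unfold plus; simpl. specialize (a_ge0 (S N)). lra.
Qed.

Lemma sum_n_incr N : sum_n a N <= sum_n a (S N).
Proof. rewrite sum_Sn. unfold plus; simpl. specialize (a_ge0 (S N)). lra. Qed.

Lemma sum_n_le_is_series l N : is_series a l -> sum_n a N <= l.
Proof. intros H. exact (is_lim_seq_incr_compare (sum_n a) l H sum_n_incr N). Qed.

Lemma term_le_is_series l N : is_series a l -> a N <= l.
Proof.
  intros H. eapply Rle_trans; [|exact (sum_n_le_is_series l N H)].
  destruct N as [|N]; [rewrite sum_O; lra|].
  rewrite sum_Sn. unfold plus; simpl. pose proof (sum_n_ge0 N). lra.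
Qed.

Lemma is_series_bounded M :
  (forall N, sum_n a N <= M) -> exists l, is_series a l /\ l <= M.
Proof.
  intros HM. destruct (ex_finite_lim_seq_incr (sum_n a) M sum_n_incr HM) as [l Hl].
  exists l. split; [exact Hl|].
  apply (is_lim_seq_le (sum_n a) (fun _ => M) l M HM Hl (is_lim_seq_const M)).
Qed.

Lemma Series_ge0 : 0 <= Series a.
Proof.
  unfold Series. assert (Hl := Lim_seq_le_loc (fun _ => 0) (sum_n a)).
  rewrite Lim_seq_const in Hl.
  destruct (Lim_seq (sum_n a)) as [l| |]; simpl in *; try lra.
  all: apply Hl; exists O; intros n _; apply sum_n_ge0.
Qed.

End NonnegSeries.

(* Specializations to [R], stated with [Rabs], [Rplus] and equations at type
   [R] so that [ring], [field] and [lra] apply to their hypotheses. *)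
Lemma ex_series_le_R (a b : nat -> R) :
  (forall n, Rabs (a n) <= b n) -> ex_series b -> ex_series a.
Proof. exact (@ex_series_le R_AbsRing R_CompleteNormedModule a b). Qed.

Lemma is_series_ext_R (a b : nat -> R) (l : R) :
  (forall n, a n = b n) -> is_series a l -> is_series b l.
Proof. exact (is_series_ext a b l). Qed.

Lemma is_series_Rplus (a b : nat -> R) (la lb : R) :
  is_series a la -> is_series b lb -> is_series (fun n => a n + b n) (la + lb).
Proof. exact (is_series_plus a b la lb). Qed.

Lemma is_series_sum_n (f : nat -> nat -> R) (l : nat -> R) K :
  (forall i, is_series (f i) (l i)) ->
  is_series (fun m => sum_n (fun i => f i m) K) (sum_n l K).
Proof.
  intros H. induction K as [|K IH].
  - rewrite sum_O. eapply is_series_ext; [|apply H]. intros n; rewrite sum_O; auto.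
  - rewrite sum_Sn. eapply is_series_ext; [|exact (is_series_plus _ _ _ _ IH (H (S K)))].
    intros n; rewrite sum_Sn; reflexivity.
Qed.

Lemma sum_n_rows_le (a : nat -> nat -> R) (row col : nat -> R) T :
  (forall k m, 0 <= a k m) ->
  (forall k, is_series (a k) (row k)) ->
  (forall m, is_series (fun k => a k m) (col m)) -> is_series col T ->
  forall K, sum_n row K <= T.
Proof.
  intros Ha Hrow Hcol HT K.
  rewrite <- (is_series_unique _ _ (is_series_sum_n a row K Hrow)), <- (is_series_unique _ _ HT).
  apply Series_le; [|exists T; exact HT].
  intros m. split; [exact (sum_n_ge0 _ (fun k => Ha k m) K)|].
  exact (sum_n_le_is_series _ (fun k => Ha k m) _ K (Hcol m)).
Qed.

Lemma is_series_swap (a : nat -> nat -> R) (col : nat -> R) T :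
  (forall k m, 0 <= a k m) ->
  (forall m, is_series (fun k => a k m) (col m)) -> is_series col T ->
  (forall k, ex_series (a k)) /\ is_series (fun k => Series (a k)) T.
Proof.
  intros Ha Hcol HT.
  assert (Hex : forall k, ex_series (a k)).
  { intros k. apply (ex_series_le_R _ col); [|exists T; exact HT].
    intros m. rewrite Rabs_pos_eq by apply Ha.
    exact (term_le_is_series _ (fun k => Ha k m) _ k (Hcol m)). }
  split; [exact Hex|].
  assert (Hrow : forall k, is_series (a k) (Series (a k))) by (intros k; apply Series_correct, Hex).
  destruct (is_series_bounded _ (fun k => Series_ge0 _ (Ha k)) T
              (sum_n_rows_le a _ col T Ha Hrow Hcol HT)) as [U [HU HUT]].
  assert (Hcol0 : forall m, 0 <= col m).
  { intros m. rewrite <- (is_series_unique _ _ (Hcol m)). exact (Series_ge0 _ (fun k => Ha k m)). }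
  destruct (is_series_bounded col Hcol0 U) as [T' [HT' HTU]].
  { exact (sum_n_rows_le (fun m k => a k m) col _ U (fun m k => Ha k m) Hcol Hrow HU). }
  rewrite <- (is_series_unique _ _ HT'), (is_series_unique _ _ HT) in HTU.
  replace T with U by lra. exact HU.
Qed.

Lemma is_series_pairs (a : nat -> R) l :
  is_series a l -> is_series (fun k => a (2 * k)%nat + a (2 * k + 1)%nat) l.
Proof.
  intros H.
  assert (E : forall N, sum_n (fun k => a (2 * k)%nat + a (2 * k + 1)%nat) N = sum_n a (2 * N + 1)).
  { induction N as [|N IH].
    - rewrite sum_O. simpl. rewrite sum_Sn, sum_O. reflexivity.
    - rewrite sum_Sn, IH. replace (2 * S N + 1)%nat with (S (S (2 * N + 1))) by lia.
      rewrite 2!sum_Sn. replace (S (2 * N + 1)) with (2 * S N)%nat by lia.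
      replace (S (2 * S N)) with (2 * S N + 1)%nat by lia.
      unfold plus; simpl. ring. }
  assert (Hlim : is_lim_seq (sum_n a) l) by exact H.
  enough (Hp : is_lim_seq (sum_n (fun k => a (2 * k)%nat + a (2 * k + 1)%nat)) l) by exact Hp.
  apply (is_lim_seq_ext (fun N => sum_n a (2 * N + 1))); [intros n; symmetry; apply E|].
  apply (is_lim_seq_subseq (sum_n a) l (fun N => 2 * N + 1)%nat); [|exact Hlim].
  intros P [N HN]. exists N. intros n Hn. apply HN. lia.
Qed.

Lemma is_series_shift0 (a : nat -> R) (l : R) :
  a O = 0 -> is_series (fun k => a (S k)) l <-> is_series a l.
Proof.
  intros H0. split; intros H.
  - apply is_series_decr_1. rewrite H0. unfold plus, opp; simpl.
    replace (l + - 0) with l by ring. exact H.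
  - apply is_series_incr_1. rewrite H0. unfold plus; simpl.
    replace (l + 0) with l by ring. exact H.
Qed.

Lemma ex_series_inv_sqr_succ : ex_series (fun k => / (INR k + 1) ^ 2).
Proof.
  set (t := fun k => 2 * (/ (INR k + 1) - / (INR k + 2))).
  assert (Ht0 : forall k, 0 <= t k).
  { intros k. pose proof (pos_INR k).
    assert (/ (INR k + 2) <= / (INR k + 1)) by (apply Rinv_le_contravar; lra). unfold t. lra. }
  apply (ex_series_le_R _ t).
  - intros k. pose proof (pos_INR k).
    rewrite Rabs_pos_eq by (apply Rlt_le, Rinv_0_lt_compat; nra).
    replace (t k) with (/ ((INR k + 1) * (INR k + 2) / 2)) by (unfold t; field; lra).
    apply Rinv_le_contravar; nra.
  - destruct (is_series_bounded t Ht0 2) as [l [Hl _]]; [|exists l; exact Hl].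
    intros N. rewrite sum_n_Reals.
    assert (E : sum_f_R0 t N = 2 - 2 / (INR N + 2)).
    { induction N as [|N IH]; [unfold t; simpl; field|].
      rewrite tech5, IH. unfold t. rewrite S_INR. pose proof (pos_INR N). field. lra. }
    rewrite E. pose proof (pos_INR N).
    assert (0 < 2 / (INR N + 2)) by (apply Rdiv_lt_0_compat; lra). lra.
Qed.

Lemma inv_sqr_ge0 u : 0 <= / u ^ 2.
Proof.
  destruct (Req_dec u 0) as [->|Hu].
  - rewrite pow_i, Rinv_0 by lia. lra.
  - apply Rlt_le, Rinv_0_lt_compat, pow2_gt_0, Hu.
Qed.

Lemma inv_sqr_scale u : / u ^ 2 = 4 * / (2 * u) ^ 2.
Proof.
  destruct (Req_dec u 0) as [->|Hu].
  - rewrite Rmult_0_r, pow_i, Rinv_0 by lia. ring.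
  - field. exact Hu.
Qed.

(* The Hurwitz zeta value zeta(2, x); a term with [x + k = 0] is [/ 0 = 0]. *)
Definition hurwitz2 (x : R) : R := Series (fun k => / (x + INR k) ^ 2).

Lemma ex_series_hurwitz2 x : ex_series (fun k => / (x + INR k) ^ 2).
Proof.
  destruct (INR_archimed 1 (Rabs x + 1) Rlt_0_1) as [K HK]. rewrite Rmult_1_r in HK.
  apply (ex_series_incr_n _ K).
  apply (ex_series_le_R _ (fun k => / (INR k + 1) ^ 2)); [|apply ex_series_inv_sqr_succ].
  intros n. rewrite plus_INR, Rabs_pos_eq by apply inv_sqr_ge0.
  pose proof (pos_INR n). pose proof (Rle_abs (- x)). rewrite Rabs_Ropp in *.
  apply Rinv_le_contravar; [apply pow_lt; lra|]. apply pow_incr; lra.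
Qed.

Lemma hurwitz2_succ x : hurwitz2 x = / x ^ 2 + hurwitz2 (x + 1).
Proof.
  unfold hurwitz2. rewrite Series_incr_1 by apply ex_series_hurwitz2.
  simpl INR at 1. rewrite Rplus_0_r. f_equal.
  apply Series_ext. intros n. rewrite S_INR. f_equal. f_equal. ring.
Qed.

Lemma hurwitz2_duplication x : hurwitz2 (x / 2) + hurwitz2 ((x + 1) / 2) = 4 * hurwitz2 x.
Proof.
  unfold hurwitz2.
  assert (E1 : forall k, / (x / 2 + INR k) ^ 2 = 4 * / (x + INR (2 * k)) ^ 2).
  { intros k. rewrite inv_sqr_scale, mult_INR. simpl INR. do 3 f_equal. field. }
  assert (E2 : forall k, / ((x + 1) / 2 + INR k) ^ 2 = 4 * / (x + INR (2 * k + 1)) ^ 2).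
  { intros k. rewrite inv_sqr_scale, plus_INR, mult_INR. simpl INR. do 3 f_equal. field. }
  rewrite (Series_ext _ _ E1), (Series_ext _ _ E2), <- Series_plus.
  - apply is_series_unique.
    apply (is_series_pairs (fun j => 4 * / (x + INR j) ^ 2)).
    exact (is_series_scal_l 4 _ _ (Series_correct _ (ex_series_hurwitz2 x))).
  - eapply ex_series_ext; [exact E1|apply ex_series_hurwitz2].
  - eapply ex_series_ext; [exact E2|apply ex_series_hurwitz2].
Qed.

Lemma hurwitz2_ge0 x : 0 <= hurwitz2 x.
Proof. apply Series_ge0. intros n. apply inv_sqr_ge0. Qed.

Lemma hurwitz2_le_1 y : 1 <= y -> hurwitz2 y <= hurwitz2 1.
Proof.
  intros Hy. apply Series_le; [|apply ex_series_hurwitz2].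
  intros n. split; [apply inv_sqr_ge0|]. pose proof (pos_INR n).
  apply Rinv_le_contravar; [apply pow_lt; lra|]. apply pow_incr; lra.
Qed.

Definition noninteger (x : R) : Prop := forall z : Z, x <> IZR z.

Definition csc2 (x : R) : R := PI ^ 2 / sin (PI * x) ^ 2.

(* The error of the partial-fraction expansion of [csc2]; it is killed by
   Herglotz's trick: it is periodic, bounded, and satisfies the same
   duplication formula as [csc2] and [hurwitz2]. *)
Definition csc2_defect (x : R) : R := csc2 x - (hurwitz2 x + hurwitz2 (1 - x)).

Lemma csc2_defect_succ x : csc2_defect (x + 1) = csc2_defect x.
Proof.
  unfold csc2_defect, csc2.
  replace (PI * (x + 1)) with (PI * x + PI) by ring. rewrite neg_sin.
  replace (1 - (x + 1)) with (- x) by ring.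
  rewrite (hurwitz2_succ x), (hurwitz2_succ (- x)). replace (- x + 1) with (1 - x) by ring.
  replace ((- sin (PI * x)) ^ 2) with (sin (PI * x) ^ 2) by ring.
  replace ((- x) ^ 2) with (x ^ 2) by ring. ring.
Qed.

Lemma csc2_defect_add_INR x n : csc2_defect (x + INR n) = csc2_defect x.
Proof.
  induction n as [|n IH]; [simpl; rewrite Rplus_0_r; reflexivity|].
  rewrite S_INR, <- Rplus_assoc, csc2_defect_succ. exact IH.
Qed.

Lemma csc2_defect_add_IZR x z : csc2_defect (x + IZR z) = csc2_defect x.
Proof.
  destruct z as [|p|p].
  - simpl. rewrite Rplus_0_r. reflexivity.
  - rewrite <- positive_nat_Z, <- INR_IZR_INZ. apply csc2_defect_add_INR.
  - rewrite <- Pos2Z.opp_pos, opp_IZR, <- positive_nat_Z, <- INR_IZR_INZ.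
    rewrite <- (csc2_defect_add_INR (x + - INR (Pos.to_nat p)) (Pos.to_nat p)).
    f_equal. ring.
Qed.

Lemma sin_PI_half_neq0 x : noninteger x -> sin (PI * (x / 2)) <> 0.
Proof.
  intros Hx H. apply sin_eq_0_0 in H. destruct H as [k Hk].
  apply (Hx (2 * k)%Z). rewrite mult_IZR. pose proof PI_RGT_0.
  apply Rmult_eq_reg_l with (PI / 2); [|lra].
  replace (PI / 2 * (2 * IZR k)) with (IZR k * PI) by field. rewrite <- Hk. field.
Qed.

Lemma cos_PI_half_neq0 x : noninteger x -> cos (PI * (x / 2)) <> 0.
Proof.
  intros Hx H. apply cos_eq_0_0 in H. destruct H as [k Hk].
  apply (Hx (2 * k + 1)%Z). rewrite plus_IZR, mult_IZR. pose proof PI_RGT_0.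
  apply Rmult_eq_reg_l with (PI / 2); [|lra].
  replace (PI / 2 * x) with (PI * (x / 2)) by field. rewrite Hk. field.
Qed.

Lemma csc2_duplication x :
  noninteger x -> csc2 (x / 2) + csc2 ((x + 1) / 2) = 4 * csc2 x.
Proof.
  intros Hx. unfold csc2.
  pose proof (sin_PI_half_neq0 x Hx) as Hs. pose proof (cos_PI_half_neq0 x Hx) as Hc.
  replace (PI * ((x + 1) / 2)) with (PI * (x / 2) + PI / 2) by field.
  rewrite sin_plus, sin_PI2, cos_PI2.
  replace (PI * x) with (2 * (PI * (x / 2))) by field. rewrite sin_2a.
  pose proof (sin2_cos2 (PI * (x / 2))) as Hsc. unfold Rsqr in Hsc.
  revert Hs Hc Hsc. generalize (sin (PI * (x / 2))) (cos (PI * (x / 2))). intros s c Hs Hc Hsc.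
  transitivity (PI ^ 2 * (s * s + c * c) / (s ^ 2 * c ^ 2)); [field; auto|].
  rewrite Hsc. field. auto.
Qed.

Lemma csc2_defect_duplication x :
  noninteger x -> csc2_defect (x / 2) + csc2_defect ((x + 1) / 2) = 4 * csc2_defect x.
Proof.
  intros Hx. unfold csc2_defect.
  pose proof (csc2_duplication x Hx).
  pose proof (hurwitz2_duplication x). pose proof (hurwitz2_duplication (1 - x)).
  replace ((1 - x) / 2) with (1 - (x + 1) / 2) in * by field.
  replace ((1 - x + 1) / 2) with (1 - x / 2) in * by field. lra.
Qed.

Lemma csc2_reflect x : csc2 (1 - x) = csc2 x.
Proof.
  unfold csc2. replace (PI * (1 - x)) with (PI - PI * x) by ring. rewrite sin_PI_x. reflexivity.
Qed.

Lemma sin_near0 t : 0 < t <= 2 -> t - t ^ 3 / 6 <= sin t <= t.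
Proof.
  intros Ht. pose proof PI2_3_2.
  pose proof (sin_bound t 0 ltac:(lra) ltac:(lra)) as [Hl Hu].
  replace (sin_approx t (2 * 0 + 1)) with (t - t ^ 3 / 6) in Hl
    by (unfold sin_approx, sin_term; simpl; field).
  replace (sin_approx t (2 * (0 + 1))) with (t - t ^ 3 / 6 + t ^ 5 / 120) in Hu
    by (unfold sin_approx, sin_term; simpl; field).
  assert (Ht3 : 0 < t ^ 3) by (apply pow_lt; lra).
  assert (Ht2 : t ^ 2 <= 4) by nra.
  assert (Ht5 : t ^ 5 <= 4 * t ^ 3) by (replace (t ^ 5) with (t ^ 2 * t ^ 3) by ring; nra).
  split; lra.
Qed.

Lemma csc2_bound x : 0 < x <= 1 / 2 -> / x ^ 2 <= csc2 x <= / x ^ 2 + 3 * PI ^ 2.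
Proof.
  intros Hx. unfold csc2. pose proof PI_RGT_0. pose proof PI_4.
  set (t := PI * x).
  assert (Ht : 0 < t <= 2) by (unfold t; split; nra).
  pose proof (sin_near0 t Ht) as Hs. set (s := sin t) in *.
  assert (Hs3 : t / 3 <= s) by (assert (t ^ 3 <= 4 * t) by nra; lra).
  assert (Hgap : t ^ 2 - s ^ 2 <= t ^ 4 / 3).
  { assert (0 <= t - s <= t ^ 3 / 6) by lra. assert (0 <= t + s <= 2 * t) by lra. nra. }
  replace (/ x ^ 2) with (PI ^ 2 / t ^ 2) by (unfold t; field; lra).
  split.
  - apply Rmult_le_compat_l; [nra|]. apply Rinv_le_contravar; nra.
  - assert (Hs2 : t ^ 2 / 9 <= s ^ 2) by nra.
    assert (Hprod : t ^ 4 / 9 <= s ^ 2 * t ^ 2).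
    { replace (t ^ 4 / 9) with (t ^ 2 / 9 * t ^ 2) by field. apply Rmult_le_compat_r; nra. }
    assert (PI ^ 2 / s ^ 2 - PI ^ 2 / t ^ 2 = PI ^ 2 * ((t ^ 2 - s ^ 2) / (s ^ 2 * t ^ 2)))
      by (field; lra).
    assert ((t ^ 2 - s ^ 2) / (s ^ 2 * t ^ 2) <= 3).
    { apply Rle_div_l; [apply Rmult_lt_0_compat; apply pow_lt; lra|lra]. }
    nra.
Qed.

Lemma csc2_defect_bounded_01 x :
  0 < x < 1 -> Rabs (csc2_defect x) <= 3 * PI ^ 2 + 4 + 2 * hurwitz2 1.
Proof.
  intros Hx. unfold csc2_defect.
  rewrite (hurwitz2_succ x), (hurwitz2_succ (1 - x)).
  pose proof (hurwitz2_le_1 (x + 1) ltac:(lra)). pose proof (hurwitz2_le_1 (1 - x + 1) ltac:(lra)).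
  pose proof (hurwitz2_ge0 (x + 1)). pose proof (hurwitz2_ge0 (1 - x + 1)).
  pose proof (hurwitz2_ge0 1). pose proof (pow2_ge_0 PI).
  assert (Hinv : forall y, 1 / 2 <= y -> / y ^ 2 <= 4).
  { intros y Hy. replace 4 with (/ (1 / 2) ^ 2) by field. apply Rinv_le_contravar; nra. }
  assert (G : -4 <= csc2 x - / x ^ 2 - / (1 - x) ^ 2 <= 3 * PI ^ 2).
  { pose proof (inv_sqr_ge0 x). pose proof (inv_sqr_ge0 (1 - x)).
    destruct (Rle_or_lt x (1 / 2)).
    - pose proof (csc2_bound x ltac:(lra)). pose proof (Hinv (1 - x) ltac:(lra)). lra.
    - rewrite <- csc2_reflect. pose proof (csc2_bound (1 - x) ltac:(lra)).
      pose proof (Hinv x ltac:(lra)). lra. }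
  apply Rabs_le. lra.
Qed.

Lemma csc2_defect_bounded x :
  noninteger x -> Rabs (csc2_defect x) <= 3 * PI ^ 2 + 4 + 2 * hurwitz2 1.
Proof.
  intros Hx. pose proof (base_Int_part x) as [H1 H2].
  replace x with ((x - IZR (Int_part x)) + IZR (Int_part x)) by ring.
  rewrite csc2_defect_add_IZR. apply csc2_defect_bounded_01.
  destruct H1 as [H1|H1]; [lra|]. exfalso. exact (Hx _ (eq_sym H1)).
Qed.

Lemma eq0_of_le_div_pow2 (c B : R) : (forall n, Rabs c <= B / 2 ^ n) -> c = 0.
Proof.
  intros Hc. destruct (Req_dec c 0) as [|Hc0]; [assumption|exfalso].
  pose proof (Rabs_pos_lt c Hc0) as Hpos.
  destruct (INR_archimed (Rabs c) B Hpos) as [n Hn].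
  assert (H2n : INR n <= 2 ^ n).
  { replace 2 with (INR 2) by (simpl; ring). rewrite <- pow_INR.
    apply le_INR, Nat.lt_le_incl, Nat.pow_gt_lin_r. lia. }
  specialize (Hc n). apply Rle_div_r in Hc; [|apply pow_lt; lra].
  assert (INR n * Rabs c <= 2 ^ n * Rabs c) by (apply Rmult_le_compat_r; lra). lra.
Qed.

Lemma csc2_defect_eq0 x : noninteger x -> csc2_defect x = 0.
Proof.
  intros Hx. set (B := 3 * PI ^ 2 + 4 + 2 * hurwitz2 1).
  apply (eq0_of_le_div_pow2 _ B). intros n. revert x Hx. induction n as [|n IH]; intros y Hy.
  - rewrite pow_O, Rdiv_1_r. apply csc2_defect_bounded, Hy.
  - assert (Hy1 : noninteger (y / 2)).
    { intros z Hz. apply (Hy (2 * z)%Z). rewrite mult_IZR, <- Hz. field. }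
    assert (Hy2 : noninteger ((y + 1) / 2)).
    { intros z Hz. apply (Hy (2 * z - 1)%Z). rewrite minus_IZR, mult_IZR, <- Hz. simpl. field. }
    pose proof (IH _ Hy1). pose proof (IH _ Hy2).
    pose proof (Rabs_triang (csc2_defect (y / 2)) (csc2_defect ((y + 1) / 2))).
    rewrite csc2_defect_duplication, Rabs_mult, (Rabs_pos_eq 4) in * by (auto; lra).
    replace (B / 2 ^ S n) with ((B / 2 ^ n + B / 2 ^ n) / 4)
      by (simpl; field; apply pow_nonzero; lra).
    lra.
Qed.

Lemma sec2_partial_fractions z : -1 < z < 1 ->
  is_series (fun k => / (INR (2 * k + 1) + z) ^ 2 + / (INR (2 * k + 1) - z) ^ 2)
    (PI ^ 2 / (4 * cos (PI * z / 2) ^ 2)).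
Proof.
  intros Hz. set (y := (1 + z) / 2).
  assert (Hy : noninteger y).
  { intros k Hk. assert (0 < IZR k < 1) as [Ha Hb] by (unfold y in Hk; lra).
    apply lt_IZR in Ha. apply lt_IZR in Hb. lia. }
  pose proof (csc2_defect_eq0 y Hy) as HD. unfold csc2_defect, csc2 in HD.
  replace (sin (PI * y)) with (cos (PI * z / 2)) in HD.
  2:{ unfold y. replace (PI * ((1 + z) / 2)) with (PI * z / 2 + PI / 2) by field.
      rewrite sin_plus, sin_PI2, cos_PI2. ring. }
  assert (Hc : 0 < cos (PI * z / 2)) by (pose proof PI_RGT_0; apply cos_gt_0; nra).
  replace (PI ^ 2 / (4 * cos (PI * z / 2) ^ 2)) with ((hurwitz2 y + hurwitz2 (1 - y)) / 4).
  2:{ replace (hurwitz2 y + hurwitz2 (1 - y)) with (PI ^ 2 / cos (PI * z / 2) ^ 2) by lra.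
      field. lra. }
  eapply is_series_ext_R; [|exact (is_series_scal_r (/ 4) _ _ (is_series_Rplus _ _ _ _
      (Series_correct _ (ex_series_hurwitz2 y)) (Series_correct _ (ex_series_hurwitz2 (1 - y)))))].
  intros k. unfold y.
  rewrite (inv_sqr_scale (_ + INR k)), (inv_sqr_scale (1 - _ + INR k)), plus_INR, mult_INR.
  simpl INR.
  replace (2 * ((1 + z) / 2 + INR k)) with ((1 + 1) * INR k + 1 + z) by field.
  replace (2 * (1 - (1 + z) / 2 + INR k)) with ((1 + 1) * INR k + 1 - z) by field.
  pose proof (pos_INR k). field. split; apply Rgt_not_eq; lra.
Qed.

Lemma is_series_PSeries (a : nat -> R) x :
  Rbar_lt (Rabs x) (CV_radius a) -> is_series (fun n => a n * x ^ n) (PSeries a x).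
Proof. intros Hx. apply is_pseries_R, PSeries_correct, CV_radius_inside, Hx. Qed.

Lemma Rabs_lt_CV_radius (a : nat -> R) M :
  (forall n, Rabs (a n) <= M) -> forall x, Rabs x < 1 -> Rbar_lt (Rabs x) (CV_radius a).
Proof.
  intros HM x Hx.
  assert (H1 : Rbar_le 1 (CV_radius a)).
  { apply (proj1 (CV_radius_bounded a)). exists M. intros n. rewrite pow1, Rmult_1_r. auto. }
  destruct (CV_radius a) as [r| |]; simpl in *; auto; lra.
Qed.

Lemma is_series_geom_sqr q : Rabs q < 1 -> is_series (fun n => INR (n + 1) * q ^ n) (/ (1 - q) ^ 2).
Proof.
  intros Hq.
  assert (Habs : ex_series (fun n => Rabs (q ^ n))).
  { apply (ex_series_ext (fun n => Rabs q ^ n)); [intros n; apply RPow_abs|].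
    apply ex_series_geom. rewrite Rabs_Rabsolu. exact Hq. }
  pose proof (is_series_mult _ _ _ _ (is_series_geom q Hq) (is_series_geom q Hq) Habs Habs) as H.
  replace (/ (1 - q) ^ 2) with (/ (1 - q) * / (1 - q))
    by (assert (1 - q <> 0) by (apply Rabs_def2 in Hq; lra); field; auto).
  eapply is_series_ext_R; [|exact H]. intros n. cbv beta.
  rewrite (sum_eq _ (fun _ => q ^ n)), sum_cte, Nat.add_1_r; [ring|].
  intros k Hk. rewrite <- pow_add. f_equal. lia.
Qed.

Lemma INR_odd_ge1 k : 1 <= INR (2 * k + 1).
Proof. rewrite plus_INR, mult_INR. simpl. pose proof (pos_INR k). lra. Qed.

Lemma dlambda_term_bounds s m : (2 <= s)%nat ->
  0 <= / INR (2 * m + 1) ^ s <= / (INR m + 1) ^ 2.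
Proof.
  intros Hs. assert (H1 : INR m + 1 <= INR (2 * m + 1)).
  { rewrite plus_INR, mult_INR. simpl. pose proof (pos_INR m). lra. }
  pose proof (pos_INR m).
  split; [apply Rlt_le, Rinv_0_lt_compat, pow_lt; lra|].
  apply Rinv_le_contravar; [apply pow_lt; lra|].
  apply Rle_trans with (INR (2 * m + 1) ^ 2); [apply pow_incr; lra|].
  apply Rle_pow; auto; lra.
Qed.

Lemma is_series_dlambda s : (2 <= s)%nat ->
  is_series (fun m => / INR (2 * m + 1) ^ s) (dlambda s).
Proof.
  intros Hs. apply Series_correct.
  apply (ex_series_le_R _ (fun m => / (INR m + 1) ^ 2)); [|apply ex_series_inv_sqr_succ].
  intros n. destruct (dlambda_term_bounds s n Hs). rewrite Rabs_pos_eq; auto.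
Qed.

Lemma dlambda_bounds s : (2 <= s)%nat -> 0 <= dlambda s <= dlambda 2.
Proof.
  intros Hs. split; [apply Series_ge0; intros n; apply (dlambda_term_bounds s n Hs)|].
  apply Series_le; [|exists (dlambda 2); apply is_series_dlambda; lia].
  intros n. split; [apply (dlambda_term_bounds s n Hs)|].
  pose proof (INR_odd_ge1 n).
  apply Rinv_le_contravar; [apply pow_lt; lra|]. apply Rle_pow; auto.
Qed.

Lemma inv_sqr_add_sub_expansion (n z : R) : 1 <= n -> Rabs z < 1 ->
  is_series (fun j => INR (j + 1) * (z ^ j + (- z) ^ j) / n ^ (j + 2))
    (/ (n + z) ^ 2 + / (n - z) ^ 2).
Proof.
  intros Hn Hz. apply Rabs_def2 in Hz.
  assert (H1 : Rabs (z / n) < 1).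
  { apply Rabs_def1; apply Rmult_lt_reg_r with n; try lra;
      unfold Rdiv; rewrite Rmult_assoc, Rinv_l; lra. }
  assert (H2 : Rabs (- z / n) < 1)
    by (unfold Rdiv; rewrite Ropp_mult_distr_l_reverse, Rabs_Ropp; exact H1).
  pose proof (is_series_scal_r (/ n ^ 2) _ _ (is_series_geom_sqr _ H1)) as G1.
  pose proof (is_series_scal_r (/ n ^ 2) _ _ (is_series_geom_sqr _ H2)) as G2.
  replace (/ (n + z) ^ 2 + / (n - z) ^ 2)
    with (/ (1 - - z / n) ^ 2 * / n ^ 2 + / (1 - z / n) ^ 2 * / n ^ 2) by (field; lra).
  eapply is_series_ext_R; [|exact (is_series_Rplus _ _ _ _ G2 G1)]. intros j.
  unfold Rdiv. rewrite !Rpow_mult_distr, !pow_inv, pow_add.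
  field. split; [lra|apply pow_nonzero; lra].
Qed.

(* Taylor coefficients of [- ln (cos (PI z / 2))] = sum_j (1 + (-1)^j) lambda(j) / j z^j. *)
Definition lnsec_coef (j : nat) : R :=
  match j with O => 0 | S _ => (1 + (-1) ^ j) * dlambda j / INR j end.

Lemma pow_m1_even_odd j :
  ((-1) ^ j = 1 /\ exists m, j = (2 * m)%nat) \/ ((-1) ^ j = -1 /\ exists m, j = (2 * m + 1)%nat).
Proof.
  destruct (Nat.Even_or_Odd j) as [[m Hm]|[m Hm]]; subst.
  - left. split; [apply pow_1_even|exists m; lia].
  - right. split; [rewrite Nat.add_1_r; apply pow_1_odd|exists m; lia].
Qed.

Lemma lnsec_coef_bound j : Rabs (lnsec_coef j) <= 2 * dlambda 2.
Proof.
  pose proof (dlambda_bounds 2 (le_n 2)) as [L0 _].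
  destruct j as [|j]; [simpl; rewrite Rabs_R0; lra|].
  unfold lnsec_coef. destruct (pow_m1_even_odd (S j)) as [[E _]|[E _]]; rewrite E.
  - destruct j as [|j]; [simpl in E; lra|].
    pose proof (dlambda_bounds (S (S j)) ltac:(lia)) as [A B].
    assert (1 <= INR (S (S j))) by (rewrite !S_INR; pose proof (pos_INR j); lra).
    rewrite Rabs_pos_eq by (apply Rdiv_le_0_compat; nra).
    apply Rle_div_l; nra.
  - replace (1 + -1) with 0 by ring. unfold Rdiv. rewrite !Rmult_0_l, Rabs_R0. lra.
Qed.

Lemma Rabs_lt_CV_radius_lnsec z : Rabs z < 1 -> Rbar_lt (Rabs z) (CV_radius lnsec_coef).
Proof. apply (Rabs_lt_CV_radius lnsec_coef (2 * dlambda 2)), lnsec_coef_bound. Qed.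

Lemma lnsec_coef_odd k : lnsec_coef (2 * k + 1) = 0.
Proof.
  unfold lnsec_coef. replace (2 * k + 1)%nat with (S (2 * k)) by lia. rewrite pow_1_odd.
  unfold Rdiv. ring.
Qed.

Lemma lnsec_coef_derive2 j :
  PS_derive (PS_derive lnsec_coef) j = INR (j + 1) * (1 + (-1) ^ j) * dlambda (j + 2).
Proof.
  unfold PS_derive, lnsec_coef. replace (j + 2)%nat with (S (S j)) by lia.
  rewrite Nat.add_1_r. simpl pow. rewrite !S_INR. pose proof (pos_INR j). field. lra.
Qed.

Lemma pow_add_pow_opp_ge0 z j : 0 <= z ^ j + (- z) ^ j.
Proof.
  replace ((- z) ^ j) with ((-1) ^ j * z ^ j) by (rewrite <- Rpow_mult_distr; f_equal; ring).
  destruct (pow_m1_even_odd j) as [[E [m ->]]|[E _]]; rewrite E; [|lra].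
  rewrite pow_mult. pose proof (pow_le (z ^ 2) m (pow2_ge_0 z)). lra.
Qed.

Lemma Rabs_pow_add_pow_opp z j : Rabs (z ^ j + (- z) ^ j) <= 2 * Rabs z ^ j.
Proof.
  eapply Rle_trans; [apply Rabs_triang|]. rewrite <- !RPow_abs, Rabs_Ropp. lra.
Qed.

Lemma ex_series_lnsec_derive2 z : Rabs z < 1 ->
  ex_series (fun j => INR (j + 1) * (z ^ j + (- z) ^ j) * dlambda (j + 2)).
Proof.
  intros Hz.
  apply (ex_series_le_R _ (fun j => INR (j + 1) * Rabs z ^ j * (2 * dlambda 2))).
  - intros j. pose proof (dlambda_bounds (j + 2) ltac:(lia)) as [L1 L2].
    pose proof (Rabs_pow_add_pow_opp z j). pose proof (pos_INR (j + 1)).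
    rewrite !Rabs_mult, (Rabs_pos_eq (INR _)), (Rabs_pos_eq (dlambda _)) by auto.
    replace (INR (j + 1) * Rabs z ^ j * (2 * dlambda 2))
      with (INR (j + 1) * (2 * Rabs z ^ j) * dlambda 2) by ring.
    apply Rmult_le_compat; try apply Rmult_le_compat_l; auto using Rmult_le_pos, Rabs_pos.
  - exists (/ (1 - Rabs z) ^ 2 * (2 * dlambda 2)). apply is_series_scal_r, is_series_geom_sqr.
    rewrite Rabs_Rabsolu. exact Hz.
Qed.

Lemma sec2_pseries z : Rabs z < 1 ->
  is_series (fun j => PS_derive (PS_derive lnsec_coef) j * z ^ j)
    (PI ^ 2 / (4 * cos (PI * z / 2) ^ 2)).
Proof.
  intros Hz.
  set (a := fun k j => INR (j + 1) * (z ^ j + (- z) ^ j) / INR (2 * k + 1) ^ (j + 2)).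
  set (C := fun j => INR (j + 1) * (z ^ j + (- z) ^ j) * dlambda (j + 2)).
  assert (Ha : forall k j, 0 <= a k j).
  { intros k j.
    apply Rdiv_le_0_compat; [apply Rmult_le_pos; [apply pos_INR|apply pow_add_pow_opp_ge0]|].
    apply pow_lt. pose proof (INR_odd_ge1 k). lra. }
  assert (Hcol : forall j, is_series (fun k => a k j) (C j)).
  { intros j. exact (is_series_scal_l (INR (j + 1) * (z ^ j + (- z) ^ j)) _ _
      (is_series_dlambda (j + 2) ltac:(lia))). }
  pose proof (Series_correct _ (ex_series_lnsec_derive2 z Hz)) as HC.
  destruct (is_series_swap a C _ Ha Hcol HC) as [_ Hrows].
  assert (Hsum : Series C = PI ^ 2 / (4 * cos (PI * z / 2) ^ 2)).
  { assert (Hz' : -1 < z < 1) by (apply Rabs_def2 in Hz; lra).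
    rewrite <- (is_series_unique _ _ (sec2_partial_fractions z Hz')).
    symmetry. apply is_series_unique. eapply is_series_ext_R; [|exact Hrows]. intros k.
    apply is_series_unique, inv_sqr_add_sub_expansion; [apply INR_odd_ge1|exact Hz]. }
  rewrite <- Hsum. eapply is_series_ext_R; [|exact HC]. intros j.
  rewrite lnsec_coef_derive2.
  replace ((- z) ^ j) with ((-1) ^ j * z ^ j) by (rewrite <- Rpow_mult_distr; f_equal; ring). ring.
Qed.

Lemma eq_of_is_derive_0 (f : R -> R) u :
  (forall t, -1 < t < 1 -> is_derive f t 0) -> -1 < u < 1 -> f u = f 0.
Proof.
  intros Hf Hu. destruct (Rtotal_order u 0) as [H|[->|H]]; [| reflexivity |].
  - apply (eq_is_derive f u 0); auto. intros t Ht. apply Hf. lra.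
  - symmetry. apply (eq_is_derive f 0 u); auto. intros t Ht. apply Hf. lra.
Qed.

Lemma cos_PI_half_pos y : -1 < y < 1 -> 0 < cos (PI * y / 2).
Proof. intros Hy. pose proof PI_RGT_0. apply cos_gt_0; nra. Qed.

Lemma tan_pseries y : -1 < y < 1 ->
  PSeries (PS_derive lnsec_coef) y = PI / 2 * sin (PI * y / 2) / cos (PI * y / 2).
Proof.
  intros Hy.
  set (g := fun t =>
    PI / 2 * sin (PI * t / 2) / cos (PI * t / 2) - PSeries (PS_derive lnsec_coef) t).
  enough (g y = 0) by (unfold g in H; lra).
  replace 0 with (g 0).
  2:{ unfold g. rewrite PSeries_0. unfold PS_derive, lnsec_coef. simpl.
      rewrite Rmult_0_r, Rdiv_0_l, sin_0, cos_0. field. }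
  apply eq_of_is_derive_0; auto. intros t Ht.
  assert (Hr : Rbar_lt (Rabs t) (CV_radius (PS_derive lnsec_coef))).
  { rewrite CV_radius_derive. apply Rabs_lt_CV_radius_lnsec, Rabs_def1; lra. }
  pose proof (is_derive_PSeries _ _ Hr) as Hd.
  rewrite (is_pseries_unique _ _ _
    (proj2 (is_pseries_R _ _ _) (sec2_pseries t ltac:(apply Rabs_def1; lra)))) in Hd.
  pose proof (cos_PI_half_pos t Ht).
  evar (d : R).
  assert (Htan : is_derive (fun t => PI / 2 * sin (PI * t / 2) / cos (PI * t / 2)) t d)
    by (auto_derive; [lra|unfold d; reflexivity]).
  replace 0 with (d - PI ^ 2 / (4 * cos (PI * t / 2) ^ 2));
    [exact (is_derive_minus _ _ _ _ _ Htan Hd)|].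
  unfold d. pose proof (sin2_cos2 (PI * t / 2)) as Hsc. unfold Rsqr in Hsc.
  change (PI * t * / 2) with (PI * t / 2).
  revert Hsc H. generalize (sin (PI * t / 2)) (cos (PI * t / 2)). intros s c Hsc Hc.
  transitivity (PI ^ 2 / 4 * ((s * s + c * c) - 1) / c ^ 2); [field; lra|].
  rewrite Hsc. field. lra.
Qed.

Lemma ln_cos_pseries z : -1 < z < 1 -> ln (cos (PI * z / 2)) = - PSeries lnsec_coef z.
Proof.
  intros Hz.
  set (g := fun y => ln (cos (PI * y / 2)) + PSeries lnsec_coef y).
  enough (g z = 0) by (unfold g in H; lra).
  replace 0 with (g 0).
  2:{ unfold g. rewrite PSeries_0. replace (PI * 0 / 2) with 0 by field.
      rewrite cos_0, ln_1. simpl. ring. }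
  apply eq_of_is_derive_0; auto. intros t Ht.
  pose proof (is_derive_PSeries _ _ (Rabs_lt_CV_radius_lnsec t ltac:(apply Rabs_def1; lra))) as Hd.
  pose proof (cos_PI_half_pos t Ht).
  evar (d : R).
  assert (Hln : is_derive (fun y => ln (cos (PI * y / 2))) t d)
    by (auto_derive; [lra|unfold d; reflexivity]).
  replace 0 with (d + PSeries (PS_derive lnsec_coef) t); [exact (is_derive_plus _ _ _ _ _ Hln Hd)|].
  unfold d. rewrite tan_pseries by exact Ht. change (PI * t * / 2) with (PI * t / 2). field. lra.
Qed.

Lemma is_derive_sum_pow_succ_div n y :
  is_derive (fun y => sum_f_R0 (fun k => y ^ (k + 1) / INR (k + 1)) n) y
    (sum_f_R0 (fun k => y ^ k) n).
Proof.
  induction n as [|n IH].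
  - simpl. auto_derive; [auto|field].
  - eapply is_derive_ext; [intros t; rewrite tech5; reflexivity|].
    rewrite tech5. apply (is_derive_plus _ _ _ _ _ IH).
    auto_derive; [auto|]. rewrite !Nat.add_1_r, S_INR.
    replace (S (S n) - 1)%nat with (S n) by lia.
    pose proof (pos_INR (S n)). rewrite S_INR in H. field. lra.
Qed.

Section LogP_expansion.

Variable q : nat.

(* With r = q + 1, the odd-even combination of [LogP r] starts at degree r + 1
   and its coefficients are 1 / (r + 1 + 2 m). *)
Definition LogP_coef (m : nat) : R := / INR (S q + 1 + 2 * m).

Lemma LogP_coef_bounds m : 0 < LogP_coef m <= 1.
Proof.
  unfold LogP_coef. assert (1 <= INR (S q + 1 + 2 * m)) by (apply (le_INR 1); lia).
  split; [apply Rinv_0_lt_compat; lra|].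
  rewrite <- Rinv_1. apply Rinv_le_contravar; lra.
Qed.

Lemma Rabs_lt_CV_radius_LogP w : Rabs w < 1 -> Rbar_lt (Rabs w) (CV_radius LogP_coef).
Proof.
  apply (Rabs_lt_CV_radius LogP_coef 1). intros n.
  pose proof (LogP_coef_bounds n). rewrite Rabs_pos_eq; lra.
Qed.

Lemma LogP_coef_ode w : Rabs w < 1 ->
  INR (S q + 1) * PSeries LogP_coef w + 2 * w * PSeries (PS_derive LogP_coef) w = / (1 - w).
Proof.
  intros Hw.
  pose proof (is_series_PSeries _ _ (Rabs_lt_CV_radius_LogP w Hw)) as H1.
  assert (Hr' : Rbar_lt (Rabs w) (CV_radius (PS_derive LogP_coef)))
    by (rewrite CV_radius_derive; apply Rabs_lt_CV_radius_LogP; auto).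
  pose proof (is_series_PSeries _ _ Hr') as H2.
  assert (H3 : is_series (fun m => INR m * LogP_coef m * w ^ m)
                 (w * PSeries (PS_derive LogP_coef) w)).
  { apply is_series_shift0; [simpl; ring|].
    rewrite Rmult_comm. eapply is_series_ext_R; [|exact (is_series_scal_r w _ _ H2)].
    intros n. unfold PS_derive. simpl pow. ring. }
  pose proof (is_series_Rplus _ _ _ _ (is_series_scal_r (INR (S q + 1)) _ _ H1)
                (is_series_scal_r 2 _ _ H3)) as H4.
  rewrite <- (is_series_unique _ _ (is_series_geom w Hw)), Rmult_assoc.
  symmetry. apply is_series_unique.
  eapply is_series_ext_R; [|rewrite Rmult_comm, (Rmult_comm 2); exact H4].
  intros n. unfold LogP_coef. rewrite !plus_INR, mult_INR, S_INR.
  replace (INR 2) with 2 by (simpl; ring). replace (INR 1) with 1 by reflexivity.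
  pose proof (pos_INR n). pose proof (pos_INR q). field. lra.
Qed.

Lemma is_derive_LogP u : u < 1 -> is_derive (LogP (S q)) u (- u ^ S q / (1 - u)).
Proof.
  intros Hu. unfold LogP. simpl (S q - 1)%nat. rewrite Nat.sub_0_r.
  replace (- u ^ S q / (1 - u)) with (- / (1 - u) + sum_f_R0 (fun k => u ^ k) q)
    by (rewrite tech3 by lra; field; lra).
  apply (is_derive_plus (fun u => ln (1 - u))); [|apply is_derive_sum_pow_succ_div].
  auto_derive; [lra|field; lra].
Qed.

Lemma is_derive_LogP_tail u : -1 < u < 1 ->
  is_derive (fun u => u ^ (S q + 1) * PSeries LogP_coef (u ^ 2)) u (u ^ S q / (1 - u ^ 2)).
Proof.
  intros Hu.
  assert (Hw : Rabs (u ^ 2) < 1) by (rewrite Rabs_pos_eq by apply pow2_ge_0; nra).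
  pose proof (is_derive_PSeries _ _ (Rabs_lt_CV_radius_LogP _ Hw)) as HH.
  assert (Hsq : is_derive (fun u => u ^ 2) u (2 * u)) by (auto_derive; [auto|ring]).
  pose proof (is_derive_comp (PSeries LogP_coef) (fun u => u ^ 2) u _ _ HH Hsq) as Hcomp.
  pose proof (is_derive_pow (fun u => u) (S q + 1) u 1 (is_derive_id u)) as Hpow.
  pose proof (is_derive_mult _ _ u _ _ Hpow Hcomp Rmult_comm) as Hd.
  unfold Rdiv. rewrite <- (LogP_coef_ode _ Hw).
  match goal with Hd : is_derive _ _ ?l |- is_derive _ _ ?l' => replace l' with l; [exact Hd|] end.
  rewrite Nat.add_1_r. unfold scal, plus, mult; simpl. unfold mult; simpl. ring.
Qed.

Lemma LogP_odd_even u : -1 < u < 1 ->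
  LogP (S q) u + (-1) ^ q * LogP (S q) (- u) = -2 * (u ^ (S q + 1) * PSeries LogP_coef (u ^ 2)).
Proof.
  intros Hu.
  set (g := fun u => LogP (S q) u + (-1) ^ q * LogP (S q) (- u)
                     + 2 * (u ^ (S q + 1) * PSeries LogP_coef (u ^ 2))).
  enough (g u = 0) by (unfold g in H; lra).
  replace 0 with (g 0).
  2:{ unfold g, LogP. rewrite Ropp_0, Rminus_0_r, ln_1, pow_i by lia.
      rewrite (sum_eq _ (fun _ => 0)), sum_cte; [ring|].
      intros i _. rewrite pow_i by lia. unfold Rdiv. ring. }
  apply eq_of_is_derive_0; auto. intros t Ht.
  pose proof (is_derive_comp (LogP (S q)) Ropp t _ _ (is_derive_LogP (- t) ltac:(lra))
                (is_derive_opp _ t 1 (is_derive_id t))) as Hopp.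
  pose proof (is_derive_plus _ _ _ _ _
                (is_derive_plus _ _ _ _ _ (is_derive_LogP t ltac:(lra))
                   (is_derive_scal _ t ((-1) ^ q) _ Hopp))
                (is_derive_scal _ t 2 _ (is_derive_LogP_tail t Ht))) as Hd.
  match goal with Hd : is_derive _ _ ?l |- _ => replace 0 with l; [exact Hd|] end.
  unfold scal, plus, opp, mult; simpl. unfold mult; simpl.
  assert (Hm : (- t) ^ q = (-1) ^ q * t ^ q) by (rewrite <- Rpow_mult_distr; f_equal; ring).
  rewrite Hm. destruct (pow_m1_even_odd q) as [[E _]|[E _]]; rewrite E; field; repeat split; nra.
Qed.

End LogP_expansion.

Lemma is_series_lnsec_even z : 0 <= z < 1 ->
  is_series (fun m => dlambda (2 * (m + 1)) / INR (m + 1) * z ^ (2 * (m + 1)))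
    (PSeries lnsec_coef z).
Proof.
  intros Hz.
  assert (Hr : Rbar_lt (Rabs z) (CV_radius lnsec_coef))
    by (apply Rabs_lt_CV_radius_lnsec; rewrite Rabs_pos_eq; lra).
  pose proof (is_series_pairs _ _ (is_series_PSeries _ _ Hr)) as H.
  assert (H2 : is_series (fun k => lnsec_coef (2 * k) * z ^ (2 * k)) (PSeries lnsec_coef z)).
  { eapply is_series_ext_R; [|exact H]. intros k. cbv beta. rewrite lnsec_coef_odd. ring. }
  apply is_series_shift0 in H2; [|simpl; ring].
  eapply is_series_ext_R; [|exact H2]. intros m. cbv beta.
  replace (2 * S m)%nat with (2 * (m + 1))%nat by lia. unfold lnsec_coef.
  replace (2 * (m + 1))%nat with (S (2 * m + 1)) at 1 2 by lia.
  replace (S (2 * m + 1)) with (2 * (m + 1))%nat by lia. rewrite pow_1_even.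
  replace (INR (2 * (m + 1))) with (2 * INR (m + 1)) by (rewrite mult_INR; reflexivity).
  pose proof (pos_INR m). rewrite plus_INR. simpl. field. lra.
Qed.

Section LogC.

Variables (q : nat) (z : R).
Hypothesis Hz : 0 <= z < 1.

Lemma logC_term k :
  let n := INR (2 * k + 1) in
  (n / 2) ^ q * (LogP (S q) (2 * (z / 2) / n) + (-1) ^ q * LogP (S q) (- (2 * (z / 2) / n))) =
  -2 * (z / 2) ^ q * Series (fun m => z ^ (2 * m + 2) / n ^ (2 * m + 2) * LogP_coef q m).
Proof.
  intros n. pose proof (INR_odd_ge1 k) as Hn. fold n in Hn.
  replace (2 * (z / 2) / n) with (z / n) by (field; lra).
  set (u := z / n).
  assert (Hu : 0 <= u < 1).
  { unfold u. split; [apply Rdiv_le_0_compat; lra|]. apply Rlt_div_l; lra. }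
  rewrite LogP_odd_even by lra.
  assert (Hw : Rabs (u ^ 2) < 1) by (rewrite Rabs_pos_eq by apply pow2_ge_0; nra).
  pose proof (is_series_scal_r (u ^ 2) _ _
                (is_series_PSeries _ _ (Rabs_lt_CV_radius_LogP q _ Hw))) as H.
  rewrite (is_series_unique _ (PSeries (LogP_coef q) (u ^ 2) * u ^ 2)).
  - replace (u ^ (S q + 1)) with (u ^ q * u ^ 2) by (rewrite <- pow_add; f_equal; lia).
    replace ((z / 2) ^ q) with ((n / 2) ^ q * u ^ q)
      by (unfold u; rewrite <- Rpow_mult_distr; f_equal; field; lra).
    ring.
  - eapply is_series_ext_R; [|exact H]. intros m. cbv beta. unfold u.
    replace (z ^ (2 * m + 2) / n ^ (2 * m + 2)) with ((z / n) ^ (2 * m + 2))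
      by (unfold Rdiv; rewrite Rpow_mult_distr, pow_inv; reflexivity).
    replace (2 * m + 2)%nat with (2 + 2 * m)%nat by lia. rewrite pow_add, pow_mult. ring.
Qed.

Definition logC_coef (m : nat) : R := z ^ (2 * m + 2) * LogP_coef q m * dlambda (2 * m + 2).

Lemma ex_series_logC_coef : ex_series logC_coef.
Proof.
  apply (ex_series_le_R _ (fun m => (z ^ 2) ^ m * dlambda 2)).
  - intros m. unfold logC_coef. pose proof (dlambda_bounds (2 * m + 2) ltac:(lia)) as [L1 L2].
    pose proof (LogP_coef_bounds q m).
    assert (0 <= z ^ (2 * m + 2) <= (z ^ 2) ^ m).
    { rewrite <- pow_mult, pow_add.
      pose proof (pow_le z (2 * m) (proj1 Hz)). pose proof (pow2_ge_0 z).
      assert (z ^ 2 <= 1) by nra. split; nra. }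
    rewrite Rabs_pos_eq by (repeat apply Rmult_le_pos; lra).
    apply Rmult_le_compat; [apply Rmult_le_pos; lra|lra| |lra].
    rewrite <- Rmult_1_r. apply Rmult_le_compat; lra.
  - exists (/ (1 - z ^ 2) * dlambda 2). apply is_series_scal_r, is_series_geom.
    rewrite Rabs_pos_eq by apply pow2_ge_0. nra.
Qed.

Lemma logC_half : logC (S q) (z / 2) = -2 * (z / 2) ^ q * Series logC_coef.
Proof.
  set (a := fun k m => z ^ (2 * m + 2) / INR (2 * k + 1) ^ (2 * m + 2) * LogP_coef q m).
  assert (Ha : forall k m, 0 <= a k m).
  { intros k m. pose proof (LogP_coef_bounds q m). pose proof (INR_odd_ge1 k).
    apply Rmult_le_pos; [apply Rdiv_le_0_compat; [apply pow_le|apply pow_lt]|]; lra. }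
  assert (Hcol : forall m, is_series (fun k => a k m) (logC_coef m)).
  { intros m. eapply is_series_ext_R;
      [|exact (is_series_scal_l (z ^ (2 * m + 2) * LogP_coef q m) _ _
                 (is_series_dlambda (2 * m + 2) ltac:(lia)))].
    intros k. unfold a. cbv beta. unfold scal; simpl; unfold mult; simpl. unfold Rdiv. ring. }
  destruct (is_series_swap a logC_coef _ Ha Hcol (Series_correct _ ex_series_logC_coef)) as [_ Hsw].
  unfold logC. replace (S q - 1)%nat with q by lia.
  rewrite (Series_ext _ (fun k => -2 * (z / 2) ^ q * Series (a k))) by (intros k; apply logC_term).
  rewrite Series_scal_l, (is_series_unique _ _ Hsw). reflexivity.
Qed.

Lemma is_series_lambda_partial_fractions : (1 <= q)%nat ->
  is_series (fun n => dlambda (2 * (n + 1)) / (INR (n + 1) * INR (2 * (n + 1) + S q - 1))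
                        * z ^ (2 * (n + 1)))
    ((PSeries lnsec_coef z - 2 * Series logC_coef) / INR q).
Proof.
  intros Hq. apply (le_INR 1) in Hq. simpl in Hq.
  pose proof (is_series_Rplus _ _ _ _ (is_series_lnsec_even z Hz)
                (is_series_scal_r (-2) _ _ (Series_correct _ ex_series_logC_coef))) as H.
  replace ((PSeries lnsec_coef z - 2 * Series logC_coef) / INR q)
    with ((PSeries lnsec_coef z + Series logC_coef * -2) * / INR q) by (unfold Rdiv; ring).
  eapply is_series_ext_R; [|exact (is_series_scal_r (/ INR q) _ _ H)]. intros m.
  unfold logC_coef, LogP_coef. replace (2 * m + 2)%nat with (2 * (m + 1))%nat by lia.
  replace (2 * (m + 1) + S q - 1)%nat with (S q + 1 + 2 * m)%nat by lia.
  rewrite !plus_INR, mult_INR, !S_INR, INR_0. pose proof (pos_INR m).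
  field. repeat split; apply Rgt_not_eq; lra.
Qed.

End LogC.

Theorem theorem2p8 (r : nat) (x : R) :
  (2 <= r)%nat -> 0 <= x -> x < PI ->
  logC r (x / (2 * PI)) =
  (x / (2 * PI)) ^ (r - 1) *
    (ln (cos (x / 2)) +
     INR (r - 1) *
       Series (fun n : nat =>
         dlambda (2 * (n + 1)) / (INR (n + 1) * INR (2 * (n + 1) + r - 1))
           * (x / PI) ^ (2 * (n + 1)))).
Proof.
  intros Hr Hx0 HxPI. destruct r as [|q]; [lia|].
  replace (S q - 1)%nat with q by lia.
  pose proof PI_RGT_0 as HPI. set (z := x / PI).
  assert (Hz : 0 <= z < 1) by (unfold z; split; [apply Rdiv_le_0_compat|apply Rlt_div_l]; lra).
  replace (x / (2 * PI)) with (z / 2) by (unfold z; field; lra).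
  replace (x / 2) with (PI * z / 2) by (unfold z; field; lra).
  rewrite logC_half, ln_cos_pseries by lra.
  rewrite (is_series_unique _ _ (is_series_lambda_partial_fractions q z Hz ltac:(lia))).
  assert (Hq : 0 < INR q) by (apply lt_0_INR; lia).
  field. lra.
Qed.
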